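(* Let $\mathfrak a_{1.3}$ be the Lie algebra of vector fields on $\mathbb R^3_{z_1,z_2,w}$ spanned by \[ P^1=\partial_{z_1},\ D^1=z_1\partial_{z_1}-w\partial_w,\ K=z_1^2\partial_{z_1}+z_1z_2\partial_{z_2}+\big(z_1w+\tfrac16z_2^{3}\big)\partial_w,\ D^2=z_2\partial_{z_2}+3w\partial_w, \] \[ P^2=\partial_{z_2},\ H=z_1\partial_{z_2}+\tfrac12z_2^{2}\partial_w,\ R(\alpha)=\alpha(z_1)z_2\partial_w,\ Z(\sigma)=\sigma(z_1)\partial_w \] ($\alpha,\sigma$ arbitrary smooth functions of $z_1$). Then any one-dimensional subalgebra of $\mathfrak a_{1.3}$ that is appropriate for Lie reduction of the equation $w_{122}+w_{22}w_{222}=0$ is $G_{1.3}$-equivalent to a subalgebra contained in the span $\mathfrak u:=\langle P^1,D^1,K,D^2,P^2,H\rangle$ or in the span $\langle P^2,R(\alpha)\rangle$ for some smooth function $\alpha$ of $z_1$.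
   Context: A one-dimensional subalgebra $\langle Q\rangle$ is appropriate for Lie reduction if the projection of $Q$ to the space of independent variables $(z_1,z_2)$ is not identically zero. $G_{1.3}$ is the point-symmetry pseudogroup of $w_{122}+w_{22}w_{222}=0$, consisting of the transformations $\tilde z_1=\frac{c_1z_1+c_2}{c_3z_1+c_4}$, $\tilde z_2=\frac{z_2+c_5z_1+c_6}{c_3z_1+c_4}$, $\tilde w=\frac{w}{\Delta(c_3z_1+c_4)}-\frac{c_3}{\Delta(c_3z_1+c_4)^2}\frac{z_2^3}6-\frac{c_3c_6-c_4c_5}{\Delta(c_3z_1+c_4)^2}\frac{z_2^2}2+W^1(z_1)z_2+W^0(z_1)$, with constants $c_i$, $\Delta:=c_1c_4-c_2c_3\ne0$, and smooth functions $W^0,W^1$. Two subalgebras are $G_{1.3}$-equivalent if one is the pushforward of the other by an element of $G_{1.3}$. *)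

From Stdlib Require Import Reals.
From Coquelicot Require Import Coquelicot.
Open Scope R_scope.

Definition smooth_at (f : R -> R) (x : R) : Prop := forall n : nat, ex_derive_n f n x.
Definition smooth (f : R -> R) : Prop := forall x, smooth_at f x.

(* Vector fields on R^3_{z1,z2,w}, given by their components
   (coefficients of d_z1, d_z2, d_w). *)
Definition vf := R -> R -> R -> (R * R * R).

Definition vadd (X Y : vf) : vf := fun z1 z2 w =>
  let '(a1, a2, a3) := X z1 z2 w in let '(b1, b2, b3) := Y z1 z2 w in
  (a1 + b1, a2 + b2, a3 + b3).
Definition vscal (c : R) (X : vf) : vf := fun z1 z2 w =>
  let '(a1, a2, a3) := X z1 z2 w in (c * a1, c * a2, c * a3).

Definition P1 : vf := fun z1 z2 w => (1, 0, 0).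
Definition D1 : vf := fun z1 z2 w => (z1, 0, - w).
Definition K  : vf := fun z1 z2 w => (z1 ^ 2, z1 * z2, z1 * w + / 6 * z2 ^ 3).
Definition D2 : vf := fun z1 z2 w => (0, z2, 3 * w).
Definition P2 : vf := fun z1 z2 w => (0, 1, 0).
Definition H  : vf := fun z1 z2 w => (0, z1, / 2 * z2 ^ 2).
Definition Rf (alpha : R -> R) : vf := fun z1 z2 w => (0, 0, alpha z1 * z2).
Definition Zf (sigma : R -> R) : vf := fun z1 z2 w => (0, 0, sigma z1).

Definition u_comb (a1 b1 k b2 a2 h : R) : vf :=
  vadd (vscal a1 P1) (vadd (vscal b1 D1) (vadd (vscal k K)
  (vadd (vscal b2 D2) (vadd (vscal a2 P2) (vscal h H))))).

Definition in_a13 (Q : vf) : Prop :=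
  exists (a1 b1 k b2 a2 h : R) (alpha sigma : R -> R),
    smooth alpha /\ smooth sigma /\
    forall z1 z2 w, Q z1 z2 w = vadd (u_comb a1 b1 k b2 a2 h) (vadd (Rf alpha) (Zf sigma)) z1 z2 w.

(* <Q> is appropriate for Lie reduction: the projection of Q to the
   (z1,z2)-space is not identically zero. *)
Definition appropriate (Q : vf) : Prop :=
  exists z1 z2 w, fst (fst (Q z1 z2 w)) <> 0 \/ snd (fst (Q z1 z2 w)) <> 0.

Definition ptrans := R -> R -> R -> (R * R * R).

Definition G13 (c1 c2 c3 c4 c5 c6 : R) (W0 W1 : R -> R) : ptrans :=
  fun z1 z2 w =>
    let den := c3 * z1 + c4 in
    let Delta := c1 * c4 - c2 * c3 in
    ( (c1 * z1 + c2) / den,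
      (z2 + c5 * z1 + c6) / den,
      w / (Delta * den)
      - c3 / (Delta * den ^ 2) * (z2 ^ 3 / 6)
      - (c3 * c6 - c4 * c5) / (Delta * den ^ 2) * (z2 ^ 2 / 2)
      + W1 z1 * z2 + W0 z1 ).

Definition dirder (F : R -> R -> R -> R) (z1 z2 w : R) (v : R * R * R) : R :=
  let '(v1, v2, v3) := v in
  Derive (fun e => F (z1 + e * v1) (z2 + e * v2) (w + e * v3)) 0.

(* (Phi_* Q)(Phi(p)) = dPhi(p) Q(p), written as a function of the source point p *)
Definition push_at (Phi : ptrans) (Q : vf) (z1 z2 w : R) : R * R * R :=
  ( dirder (fun a b c => fst (fst (Phi a b c))) z1 z2 w (Q z1 z2 w),
    dirder (fun a b c => snd (fst (Phi a b c))) z1 z2 w (Q z1 z2 w),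
    dirder (fun a b c => snd (Phi a b c)) z1 z2 w (Q z1 z2 w) ).

From Stdlib Require Import Reals Lra Classical FunctionalExtensionality.
From Coquelicot Require Import Coquelicot.
Open Scope R_scope.

(* Write Q as xi(z1) d_z1 + (...) d_z2 + (...) d_w with xi = a1 + b1 z1 + k z1^2.
   The gauge transformations w -> w + W1(z1) z2 + W0(z1) in G_{1.3} shift the
   R(alpha)- and Z(sigma)-parts of Q by linear first-order expressions in W1, W0
   with leading coefficient xi.  Where xi <> 0, solving these two linear ODEs on
   an interval removes both parts and leaves an element of u.  If xi = 0
   identically, appropriateness forces a nonzero d_z2-part: when it contains
   b2 D2 the same gauge removes R and Z algebraically; otherwise a
   fractional-linear change of z1 turns the d_z2-part into P2, W1 removes
   Z(sigma), and what is left is P2 + R(alpha~). *)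

Lemma Derive_n_Derive (f : R -> R) n x : Derive_n (Derive f) n x = Derive_n f (S n) x.
Proof. rewrite <- Nat.add_1_r. exact (Derive_n_comp f n 1 x). Qed.

Lemma ex_derive_n_S (f g : R -> R) n x :
  locally x (fun t => is_derive f t (g t)) -> ex_derive_n g n x -> ex_derive_n f (S n) x.
Proof.
  intros Hfg Hg. destruct n as [|n].
  - exists (g x). exact (locally_singleton _ _ Hfg).
  - apply (ex_derive_ext (Derive_n (Derive f) n)); [intro t; apply Derive_n_Derive |].
    apply (ex_derive_n_ext_loc g (Derive f) (S n) x); [| exact Hg].
    apply (filter_imp (fun t => is_derive f t (g t))); [| exact Hfg].
    intros t Ht. symmetry. exact (is_derive_unique _ _ _ Ht).
Qed.

Lemma ex_derive_continuous_R (f : R -> R) x : ex_derive f x -> continuous f x.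
Proof. exact (ex_derive_continuous (K := R_AbsRing) (V := R_NormedModule) f x). Qed.

Lemma smooth_Derive (F : R -> R) : smooth F -> smooth (Derive F).
Proof.
  intros HF x [|n]; [exact I |].
  apply (ex_derive_ext (Derive_n F (S n))); [intro t; symmetry; apply Derive_n_Derive |].
  exact (HF x (S (S n))).
Qed.

Lemma smooth_exp : smooth exp.
Proof. intros x [|n]; [exact I | exists (exp x); exact (is_derive_n_exp (S n) x)]. Qed.

Section Elementary.

Variables lo hi : R.

Lemma locally_in_interval x : lo < x < hi -> locally x (fun t => lo < t < hi).
Proof. intros [Hlo Hhi]. apply (locally_interval _ x lo hi); auto. Qed.

Lemma smooth_at_of_derive_closed (S : (R -> R) -> Prop) :
  (forall f, S f -> exists g, S g /\ forall x, lo < x < hi -> is_derive f x (g x)) ->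
  forall f x, S f -> lo < x < hi -> smooth_at f x.
Proof.
  intros HS f x Sf Hx n. revert f x Sf Hx. induction n as [|n IH]; intros f x Sf Hx.
  - exact I.
  - destruct (HS f Sf) as [g [Sg Dg]].
    apply (ex_derive_n_S f g); [| exact (IH g x Sg Hx)].
    exact (filter_imp _ _ Dg (locally_in_interval x Hx)).
Qed.

(* A class of functions on ]lo, hi[ closed under differentiation
   (elementary_derive), hence made of smooth functions; it contains the
   solutions of the linear ODEs needed below. *)
Inductive elementary : (R -> R) -> Prop :=
| elem_const c : elementary (fun _ => c)
| elem_id : elementary (fun x => x)
| elem_plus f g : elementary f -> elementary g -> elementary (fun x => f x + g x)
| elem_opp f : elementary f -> elementary (fun x => - f x)
| elem_mult f g : elementary f -> elementary g -> elementary (fun x => f x * g x)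
| elem_pow f n : elementary f -> elementary (fun x => f x ^ n)
| elem_inv f : elementary f -> (forall x, lo < x < hi -> f x <> 0) ->
    elementary (fun x => / f x)
| elem_comp F f : smooth F -> elementary f -> elementary (fun x => F (f x))
| elem_RInt f x0 : elementary f -> lo < x0 < hi -> elementary (fun x => RInt f x0 x).

Lemma is_derive_RInt_interval (f : R -> R) x0 x :
  (forall t, lo < t < hi -> continuous f t) -> lo < x0 < hi -> lo < x < hi ->
  is_derive (fun y => RInt f x0 y) x (f x).
Proof.
  intros Hc Hx0 Hx. apply is_derive_RInt with (a := x0); [| apply Hc; exact Hx].
  apply (filter_imp (fun b => lo < b < hi)); [| exact (locally_in_interval x Hx)].
  intros b Hb. apply RInt_correct, ex_RInt_continuous. intros t [Ht1 Ht2]. apply Hc.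
  split.
  - eapply Rlt_le_trans; [| exact Ht1]. apply Rmin_case; lra.
  - eapply Rle_lt_trans; [exact Ht2 |]. apply Rmax_case; lra.
Qed.

Lemma elementary_derive f : elementary f ->
  exists g, elementary g /\ forall x, lo < x < hi -> is_derive f x (g x).
Proof.
  induction 1 as [c | | f g _ [f' [Ef' Df]] _ [g' [Eg' Dg]] | f _ [f' [Ef' Df]]
    | f g Ef [f' [Ef' Df]] Eg [g' [Eg' Dg]] | f n Ef [f' [Ef' Df]]
    | f Ef [f' [Ef' Df]] Hf | F f HF Ef [f' [Ef' Df]] | f x0 Ef [f' [Ef' Df]] Hx0].
  - exists (fun _ => 0). split; [apply elem_const |].
    intros x _. exact (is_derive_const (K := R_AbsRing) c x).
  - exists (fun _ => 1). split; [apply elem_const |].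
    intros x _. exact (is_derive_id (K := R_AbsRing) x).
  - exists (fun x => f' x + g' x). split; [exact (elem_plus _ _ Ef' Eg') |].
    intros x Hx. exact (is_derive_plus f g x _ _ (Df x Hx) (Dg x Hx)).
  - exists (fun x => - f' x). split; [exact (elem_opp _ Ef') |].
    intros x Hx. exact (is_derive_opp f x _ (Df x Hx)).
  - exists (fun x => f' x * g x + f x * g' x).
    split; [exact (elem_plus _ _ (elem_mult _ _ Ef' Eg) (elem_mult _ _ Ef Eg')) |].
    intros x Hx. exact (is_derive_mult f g x _ _ (Df x Hx) (Dg x Hx) Rmult_comm).
  - exists (fun x => INR n * f' x * f x ^ pred n).
    split; [exact (elem_mult _ _ (elem_mult _ _ (elem_const _) Ef') (elem_pow _ _ Ef)) |].
    intros x Hx. apply is_derive_pow; auto.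
  - exists (fun x => - f' x * / f x ^ 2).
    split.
    + apply (elem_mult (fun x => - f' x)); [exact (elem_opp _ Ef') |].
      apply (elem_inv (fun x => f x ^ 2)); [exact (elem_pow _ _ Ef) |].
      intros x Hx. apply pow_nonzero, Hf, Hx.
    + intros x Hx. apply is_derive_inv; auto.
  - exists (fun x => f' x * Derive F (f x)).
    split; [exact (elem_mult _ _ Ef' (elem_comp _ _ (smooth_Derive F HF) Ef)) |].
    intros x Hx. apply (is_derive_comp F f); [| auto].
    apply Derive_correct. exact (HF (f x) 1%nat).
  - exists f. split; [exact Ef |].
    intros x Hx. apply is_derive_RInt_interval; auto.
    intros t Ht. apply ex_derive_continuous_R. exists (f' t). auto.
Qed.

Lemma elementary_smooth f x : elementary f -> lo < x < hi -> smooth_at f x.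
Proof. exact (smooth_at_of_derive_closed elementary elementary_derive f x). Qed.

Lemma elementary_ex_derive f x : elementary f -> lo < x < hi -> ex_derive f x.
Proof. intros Ef Hx. exact (elementary_smooth f x Ef Hx 1%nat). Qed.

Lemma elementary_continuous f x : elementary f -> lo < x < hi -> continuous f x.
Proof.
  intros Ef Hx. exact (ex_derive_continuous_R f x (elementary_ex_derive f x Ef Hx)).
Qed.

Lemma linear_ode_elementary p q x0 :
  elementary p -> elementary q -> lo < x0 < hi ->
  exists y, elementary y /\ forall x, lo < x < hi -> is_derive y x (p x * y x + q x).
Proof.
  intros Ep Eq Hx0.
  set (P := fun x => RInt p x0 x).
  set (g := fun s => q s * exp (- P s)).
  assert (EP : elementary P) by exact (elem_RInt p x0 Ep Hx0).
  assert (Eg : elementary g).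
  { exact (elem_mult _ _ Eq (elem_comp exp _ smooth_exp (elem_opp _ EP))). }
  (* variation of constants *)
  exists (fun x => exp (P x) * RInt g x0 x). split.
  - exact (elem_mult _ _ (elem_comp exp _ smooth_exp EP) (elem_RInt g x0 Eg Hx0)).
  - intros x Hx.
    assert (DP : is_derive P x (p x)).
    { apply is_derive_RInt_interval; auto.
      intros t Ht. exact (elementary_continuous p t Ep Ht). }
    assert (DG : is_derive (fun y => RInt g x0 y) x (g x)).
    { apply is_derive_RInt_interval; auto.
      intros t Ht. exact (elementary_continuous g t Eg Ht). }
    assert (DE : is_derive (fun y => exp (P y)) x (p x * exp (P x))).
    { exact (is_derive_comp exp P x _ _ (is_derive_exp (P x)) DP). }
    replace (p x * (exp (P x) * RInt g x0 x) + q x)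
      with (p x * exp (P x) * RInt g x0 x + exp (P x) * g x).
    + exact (is_derive_mult _ _ x _ _ DE DG Rmult_comm).
    + unfold g. rewrite exp_Ropp. field. apply Rgt_not_eq, exp_pos.
Qed.

End Elementary.

Lemma continuous_neq0_interval (f : R -> R) x0 : continuous f x0 -> f x0 <> 0 ->
  exists lo hi, lo < x0 < hi /\ forall x, lo < x < hi -> f x <> 0.
Proof.
  intros Hc Hf.
  destruct (Hc _ (open_neq 0 (f x0) Hf)) as [eps Heps].
  exists (x0 - eps), (x0 + eps). split; [destruct eps; simpl; lra |].
  intros x Hx. apply Heps. change (Rabs (x + - x0) < eps). apply Rabs_def1; lra.
Qed.

Lemma push_at_G13 c1 c2 c3 c4 c5 c6 (W0 W1 : R -> R) (Q : vf) z1 z2 w v1 v2 v3 :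
  c3 * z1 + c4 <> 0 -> c1 * c4 - c2 * c3 <> 0 -> ex_derive W0 z1 -> ex_derive W1 z1 ->
  Q z1 z2 w = (v1, v2, v3) ->
  let den := c3 * z1 + c4 in
  let Delta := c1 * c4 - c2 * c3 in
  push_at (G13 c1 c2 c3 c4 c5 c6 W0 W1) Q z1 z2 w =
  ( v1 * Delta / den ^ 2,
    (v2 + c5 * v1) / den - (z2 + c5 * z1 + c6) * c3 * v1 / den ^ 2,
    v3 / (Delta * den)
    + v2 * (- c3 / (Delta * den ^ 2) * (z2 ^ 2 / 2)
            - (c3 * c6 - c4 * c5) / (Delta * den ^ 2) * z2 + W1 z1)
    + v1 * (- w * c3 / (Delta * den ^ 2)
            + c3 * c3 / (Delta * den ^ 3) * (z2 ^ 3 / 3)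
            + c3 * (c3 * c6 - c4 * c5) / (Delta * den ^ 3) * z2 ^ 2
            + Derive W1 z1 * z2 + Derive W0 z1)).
Proof.
  intros Hden HDelta HW0 HW1 HQ. cbv zeta.
  unfold push_at, dirder. rewrite HQ. cbv beta zeta iota delta [G13 fst snd].
  f_equal; [f_equal |]; apply is_derive_unique; auto_derive;
    rewrite ?Rmult_0_l, ?Rplus_0_r, ?Rmult_1_r; repeat split; auto;
    repeat (apply Rmult_integral_contrapositive; split); auto.
  - field; auto.
  - field; auto.
  - change (Derive (fun x => W1 x) z1) with (Derive W1 z1).
    change (Derive (fun x => W0 x) z1) with (Derive W0 z1).
    field; auto.
Qed.

Ltac elementary_tac :=
  first
  [ assumption
  | apply elem_const
  | apply elem_id
  | lazymatch goal with
    | |- elementary ?lo ?hi (fun x => @?f x + @?g x) =>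
        apply (elem_plus lo hi f g); elementary_tac
    | |- elementary ?lo ?hi (fun x => @?f x - @?g x) =>
        apply (elem_plus lo hi f (fun x => - g x));
        [elementary_tac | apply (elem_opp lo hi g); elementary_tac]
    | |- elementary ?lo ?hi (fun x => - @?f x) =>
        apply (elem_opp lo hi f); elementary_tac
    | |- elementary ?lo ?hi (fun x => @?f x / @?g x) =>
        apply (elem_mult lo hi f (fun x => / g x));
        [elementary_tac |
         apply (elem_inv lo hi g); [elementary_tac | try (intros ? ?; solve [auto])]]
    | |- elementary ?lo ?hi (fun x => / @?f x) =>
        apply (elem_inv lo hi f); [elementary_tac | try (intros ? ?; solve [auto])]
    | |- elementary ?lo ?hi (fun x => @?f x * @?g x) =>
        apply (elem_mult lo hi f g); elementary_tac
    | |- elementary ?lo ?hi (fun x => @?f x ^ ?n) =>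
        apply (elem_pow lo hi f n); elementary_tac
    | |- elementary ?lo ?hi (fun x => ?F (@?f x)) =>
        apply (elem_comp lo hi F f); [assumption | elementary_tac]
    | |- elementary ?lo ?hi ?F =>
        apply (elem_comp lo hi F (fun x => x)); [assumption | apply elem_id]
    end ].

Definition a13_field (a1 b1 k b2 a2 h : R) (alpha sigma : R -> R) : vf :=
  fun z1 z2 w =>
  ( a1 + b1 * z1 + k * z1 ^ 2,
    k * z1 * z2 + b2 * z2 + a2 + h * z1,
    (- b1 + k * z1 + 3 * b2) * w + k * z2 ^ 3 / 6 + h * z2 ^ 2 / 2
    + alpha z1 * z2 + sigma z1 ).

Lemma in_a13_field (Q : vf) : in_a13 Q ->
  exists a1 b1 k b2 a2 h alpha sigma, smooth alpha /\ smooth sigma /\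
    Q = a13_field a1 b1 k b2 a2 h alpha sigma.
Proof.
  intros [a1 [b1 [k [b2 [a2 [h [alpha [sigma [Halpha [Hsigma HQ]]]]]]]]]].
  exists a1, b1, k, b2, a2, h, alpha, sigma. split; [exact Halpha |]. split; [exact Hsigma |].
  extensionality z1; extensionality z2; extensionality w. rewrite HQ.
  unfold a13_field, u_comb, vadd, vscal, P1, D1, K, D2, P2, H, Rf, Zf.
  cbv beta iota zeta. f_equal; [f_equal |]; field.
Qed.

Definition G13_reduces_to_u_or_P2R (Q : vf) : Prop :=
  exists (c1 c2 c3 c4 c5 c6 : R) (W0 W1 : R -> R) (lo hi : R),
    c1 * c4 - c2 * c3 <> 0 /\ lo < hi /\
    (forall z1, lo < z1 < hi ->
       c3 * z1 + c4 <> 0 /\ smooth_at W0 z1 /\ smooth_at W1 z1) /\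
    let Phi := G13 c1 c2 c3 c4 c5 c6 W0 W1 in
    ( (exists a1 b1 k b2 a2 h : R,
         forall z1 z2 w, lo < z1 < hi ->
           let '(t1, t2, t3) := Phi z1 z2 w in
           push_at Phi Q z1 z2 w = u_comb a1 b1 k b2 a2 h t1 t2 t3)
      \/
      (exists (lam mu : R) (alpha : R -> R),
         (forall z1 z2 w, lo < z1 < hi -> smooth_at alpha (fst (fst (Phi z1 z2 w)))) /\
         forall z1 z2 w, lo < z1 < hi ->
           let '(t1, t2, t3) := Phi z1 z2 w in
           push_at Phi Q z1 z2 w = vadd (vscal lam P2) (vscal mu (Rf alpha)) t1 t2 t3) ).

Lemma reduce_nondegenerate a1 b1 k b2 a2 h alpha sigma z0 :
  smooth alpha -> smooth sigma -> a1 + b1 * z0 + k * z0 ^ 2 <> 0 ->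
  G13_reduces_to_u_or_P2R (a13_field a1 b1 k b2 a2 h alpha sigma).
Proof.
  intros Halpha Hsigma Hz0.
  destruct (continuous_neq0_interval (fun z => a1 + b1 * z + k * z ^ 2) z0)
    as [lo [hi [Hz0I Hxi]]]; [| exact Hz0 |].
  { apply ex_derive_continuous_R. auto_derive. trivial. }
  destruct (linear_ode_elementary lo hi (fun z => (2 * b2 - b1) / (a1 + b1 * z + k * z ^ 2))
              (fun z => - alpha z / (a1 + b1 * z + k * z ^ 2)) z0)
    as [W1 [EW1 DW1]]; [elementary_tac .. | exact Hz0I |].
  destruct (linear_ode_elementary lo hi
              (fun z => (- b1 + k * z + 3 * b2) / (a1 + b1 * z + k * z ^ 2))
              (fun z => - (sigma z + (a2 + h * z) * W1 z) / (a1 + b1 * z + k * z ^ 2)) z0)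
    as [W0 [EW0 DW0]]; [elementary_tac .. | exact Hz0I |].
  exists 1, 0, 0, 1, 0, 0, W0, W1, lo, hi.
  split; [lra |]. split; [lra |]. split.
  { intros z Hz. split; [lra |]. split; eapply elementary_smooth; eauto. }
  left. exists a1, b1, k, b2, a2, h. intros z1 z2 w Hz.
  rewrite (push_at_G13 1 0 0 1 0 0 W0 W1 _ z1 z2 w _ _ _ ltac:(lra) ltac:(lra)
             (elementary_ex_derive lo hi W0 z1 EW0 Hz)
             (elementary_ex_derive lo hi W1 z1 EW1 Hz) eq_refl).
  rewrite (is_derive_unique _ _ _ (DW1 z1 Hz)), (is_derive_unique _ _ _ (DW0 z1 Hz)).
  specialize (Hxi z1 Hz).
  unfold G13, u_comb, vadd, vscal, P1, D1, K, D2, P2, H. cbv beta iota zeta.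
  f_equal; [f_equal |]; field; lra.
Qed.

Lemma reduce_scaling b2 a2 h alpha sigma :
  smooth alpha -> smooth sigma -> b2 <> 0 ->
  G13_reduces_to_u_or_P2R (a13_field 0 0 0 b2 a2 h alpha sigma).
Proof.
  intros Halpha Hsigma Hb2.
  set (W1 := fun z => alpha z / (2 * b2)).
  set (W0 := fun z => (sigma z + (a2 + h * z) * W1 z) / (3 * b2)).
  assert (EW1 : elementary 0 1 W1) by (unfold W1; elementary_tac; intros; lra).
  assert (EW0 : elementary 0 1 W0) by (unfold W0; elementary_tac; intros; lra).
  exists 1, 0, 0, 1, 0, 0, W0, W1, 0, 1.
  split; [lra |]. split; [lra |]. split.
  { intros z Hz. split; [lra |]. split; eapply elementary_smooth; eauto. }
  left. exists 0, 0, 0, b2, a2, h. intros z1 z2 w Hz.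
  rewrite (push_at_G13 1 0 0 1 0 0 W0 W1 _ z1 z2 w _ _ _ ltac:(lra) ltac:(lra)
             (elementary_ex_derive 0 1 W0 z1 EW0 Hz)
             (elementary_ex_derive 0 1 W1 z1 EW1 Hz) eq_refl).
  unfold W0, W1, G13, u_comb, vadd, vscal, P1, D1, K, D2, P2, H. cbv beta iota zeta.
  f_equal; [f_equal |]; field; lra.
Qed.

Lemma fractional_linear_inverse a2 h z :
  h * z + a2 <> 0 -> a2 * a2 - - h * h <> 0 ->
  let t := (a2 * z + - h) / (h * z + a2) in
  a2 - t * h <> 0 /\ (h + t * a2) / (a2 - t * h) = z.
Proof.
  intros Hden HDelta t.
  assert (Ht : (a2 - t * h) * (h * z + a2) = a2 * a2 - - h * h)
    by (unfold t; field; exact Hden).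
  assert (Hnz : a2 - t * h <> 0).
  { intro E. rewrite E, Rmult_0_l in Ht. exact (HDelta (eq_sym Ht)). }
  split; [exact Hnz |]. unfold t. field. split; [exact Hden |].
  replace (a2 * (h * z + a2) - (a2 * z + - h) * h) with (a2 * a2 - - h * h) by ring.
  exact HDelta.
Qed.

Lemma reduce_P2_R a2 h alpha sigma z0 :
  smooth alpha -> smooth sigma -> h * z0 + a2 <> 0 ->
  G13_reduces_to_u_or_P2R (a13_field 0 0 0 0 a2 h alpha sigma).
Proof.
  intros Halpha Hsigma Hz0.
  assert (HDelta : a2 * a2 - - h * h <> 0).
  { intro E. apply Hz0. assert (a2 = 0) by nra. assert (h = 0) by nra. subst. ring. }
  destruct (continuous_neq0_interval (fun z => h * z + a2) z0)
    as [lo [hi [Hz0I Hden]]]; [| exact Hz0 |].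
  { apply ex_derive_continuous_R. auto_derive. trivial. }
  set (W1 := fun z => - sigma z / ((a2 * a2 - - h * h) * (h * z + a2) ^ 2)).
  assert (EW1 : elementary lo hi W1).
  { unfold W1. elementary_tac. intros x Hx.
    apply Rmult_integral_contrapositive. split; [exact HDelta | apply pow_nonzero, Hden, Hx]. }
  exists a2, (- h), h, a2, 0, 0, (fun _ => 0), W1, lo, hi.
  split; [exact HDelta |]. split; [lra |]. split.
  { intros z Hz. split; [exact (Hden z Hz) |].
    split; apply (elementary_smooth lo hi); auto using elem_const. }
  right. exists 1, 1, (fun t => alpha ((h + t * a2) / (a2 - t * h)) / (a2 * a2 - - h * h)).
  split.
  - intros z1 z2 w Hz. unfold G13. cbv beta zeta. cbn [fst snd].
    destruct (fractional_linear_inverse a2 h z1 (Hden z1 Hz) HDelta) as [Ht _].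
    set (t1 := (a2 * z1 + - h) / (h * z1 + a2)) in *.
    destruct (continuous_neq0_interval (fun t => a2 - t * h) t1)
      as [lo' [hi' [Ht1 Hnz]]]; [| exact Ht |].
    { apply ex_derive_continuous_R. auto_derive. trivial. }
    apply (elementary_smooth lo' hi'); [elementary_tac | exact Ht1].
  - intros z1 z2 w Hz.
    rewrite (push_at_G13 a2 (- h) h a2 0 0 (fun _ => 0) W1 _ z1 z2 w _ _ _
               (Hden z1 Hz) HDelta
               (elementary_ex_derive lo hi _ z1 (elem_const lo hi 0) Hz)
               (elementary_ex_derive lo hi W1 z1 EW1 Hz) eq_refl).
    destruct (fractional_linear_inverse a2 h z1 (Hden z1 Hz) HDelta) as [_ Hinv].
    unfold W1, G13, vadd, vscal, P2, Rf. cbv beta iota zeta. rewrite Hinv.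
    pose proof (Hden z1 Hz).
    f_equal; [f_equal |]; field; auto.
Qed.

Lemma quadratic_identically_zero a b c :
  (forall z, a + b * z + c * z ^ 2 = 0) -> a = 0 /\ b = 0 /\ c = 0.
Proof.
  intros Hq. pose proof (Hq 0) as H0. pose proof (Hq 1) as H1. pose proof (Hq (-1)) as H2.
  simpl in *. lra.
Qed.

Theorem lemma13 (Q : vf) :
  in_a13 Q -> appropriate Q ->
  exists (c1 c2 c3 c4 c5 c6 : R) (W0 W1 : R -> R) (lo hi : R),
    c1 * c4 - c2 * c3 <> 0 /\ lo < hi /\
    (forall z1, lo < z1 < hi ->
       c3 * z1 + c4 <> 0 /\ smooth_at W0 z1 /\ smooth_at W1 z1) /\
    let Phi := G13 c1 c2 c3 c4 c5 c6 W0 W1 in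
    ( (exists a1 b1 k b2 a2 h : R,
         forall z1 z2 w, lo < z1 < hi ->
           let '(t1, t2, t3) := Phi z1 z2 w in
           push_at Phi Q z1 z2 w = u_comb a1 b1 k b2 a2 h t1 t2 t3)
      \/
      (exists (lam mu : R) (alpha : R -> R),
         (forall z1 z2 w, lo < z1 < hi -> smooth_at alpha (fst (fst (Phi z1 z2 w)))) /\
         forall z1 z2 w, lo < z1 < hi ->
           let '(t1, t2, t3) := Phi z1 z2 w in
           push_at Phi Q z1 z2 w = vadd (vscal lam P2) (vscal mu (Rf alpha)) t1 t2 t3) ).
Proof.
  intros HQ Happ.
  destruct (in_a13_field Q HQ)
    as [a1 [b1 [k [b2 [a2 [h [alpha [sigma [Halpha [Hsigma ->]]]]]]]]]].
  destruct (classic (exists z0, a1 + b1 * z0 + k * z0 ^ 2 <> 0)) as [[z0 Hz0] | Hxi].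
  - exact (reduce_nondegenerate a1 b1 k b2 a2 h alpha sigma z0 Halpha Hsigma Hz0).
  - destruct (quadratic_identically_zero a1 b1 k) as [-> [-> ->]].
    { intro z. apply NNPP. intro Hz. apply Hxi. exists z. exact Hz. }
    destruct (Req_dec b2 0) as [-> | Hb2].
    + destruct Happ as [z1 [z2 [w [Hp | Hp]]]]; cbn in Hp.
      * exfalso. apply Hp. ring.
      * apply (reduce_P2_R a2 h alpha sigma z1 Halpha Hsigma). intro E. apply Hp. lra.
    + exact (reduce_scaling b2 a2 h alpha sigma Halpha Hsigma Hb2).
Qed.
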